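(* Let $q>2$ be a power of $2$ and let $U$ be an intersecting family of polynomials over $\mathbb{F}_q$ of degree at most $2$, with $f$, $B_t$, $\mathrm{Dom}$ as in the context. Let $A,B\colon\mathrm{Dom}\to\mathbb{F}_q$ be functions such that $f(b,b+t)=A(t)b+B(t)$ for every $t\in\mathrm{Dom}$ and $b\in B_t$, and $\mathrm{Tr}_{q/2}(A(t))=0$ for every $t\in\mathrm{Dom}$. Then there exist $\alpha,\beta\in\mathbb{F}_q$ such that $A(t)=\alpha^{q/2}+\alpha$ and $B(t)=\alpha t+\beta$ for each $t\in\mathrm{Dom}$.
   Context: $q=2^n$ and $\mathrm{Tr}_{q/2}(x)=x+x^2+\cdots+x^{2^{n-1}}$. A set of polynomials over $\mathbb{F}_q$ is intersecting if the graphs $\{(x,g(x)):x\in\mathbb{F}_q\}$ of any two members share a point. For such $U$ of degree at most $2$, let $D=\{(b,c)\in\mathbb{F}_q^2 : a+bx+cx^2\in U\text{ for some } a\}$; for $(b,c)\in D$ this $a$ is unique and $f(b,c):=a$. For $t\in\mathbb{F}_q$ let $B_t=\{b\in\mathbb{F}_q : (b,b+t)\in D\}$ and $\mathrm{Dom}=\{t\in\mathbb{F}_q : |B_t|\ge q-\sqrt{q}/2\}$. *)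

From HB Require Import structures.
From mathcomp Require Import all_boot all_order all_algebra all_field.
Set Implicit Arguments. Unset Strict Implicit. Unset Printing Implicit Defensive.
Import Order.TTheory GRing.Theory Num.Theory.
Local Open Scope ring_scope.

Section Defs.
Variable F : finFieldType.

Definition quad (a b c : F) : {poly F} := a%:P + b *: 'X + c *: 'X^2.

Definition intersecting (U : {pred {poly F}}) : Prop :=
  forall g h, g \in U -> h \in U -> exists x, g.[x] = h.[x].

Definition deg_le2 (U : {pred {poly F}}) : Prop :=
  forall g, g \in U -> (size g <= 3)%N.

(* f(b,c) := the (unique, for intersecting U) a with a+bx+cx^2 in U;
   0 if (b,c) is not in D (never used there) *)
Definition fU (U : {pred {poly F}}) (b c : F) : F :=
  odflt 0 [pick a | quad a b c \in U].

Definition Bset (U : {pred {poly F}}) (t : F) : {set F} :=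
  [set b | [exists a, quad a b (b + t) \in U]].

Definition inDom (U : {pred {poly F}}) (t : F) : bool :=
  ((#|F|%:R : algC) - sqrtC (#|F|%:R) / 2 <= #|Bset U t|%:R).

Definition trace2 (n : nat) (x : F) : F := \sum_(i < n) x ^+ (2 ^ i).
End Defs.

From HB Require Import structures.
From mathcomp Require Import all_boot all_order all_algebra all_field.
From mathcomp Require Import ring zify.
Import Order.TTheory GRing.Theory Num.Theory.
Local Open Scope ring_scope.

(* If two members of U with linear coefficients b1 <> b2 meet at x,
   then (a1 - a2) (c1 - c2) / (b1 - b2)^2 = y^2 + y with y = (c1 - c2) x / (b1 - b2),
   so this quantity has absolute trace 0.  Fix t, s in Dom and b in B_t, and let
   b' run over B_s, which has more than q/2 elements: the traces of W / (b - b')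
   all vanish for one fixed W, and since the trace form is nondegenerate W = 0.
   Squared, this reads P (t - s) = (P + A(s) (t - s))^2 with
   P = (A(t) - A(s)) b + B(t) - B(s).  If A(t) <> A(s) this quadratic equation in P
   would have |B_t| > 2 distinct solutions, so A is constant on Dom.  Writing
   A = alpha^(q/2) + alpha, the same identity says that g(t) = B(t) - alpha t
   satisfies g(t) - g(s) \in {0, t - s}, so g is constant or t + constant on Dom;
   in the second case alpha is replaced by alpha + 1. *)

Lemma card_roots_inj {T : finType} {R : idomainType} {g : T -> R} {p : {poly R}} :
  injective g -> p != 0 -> (#|[set x | root p (g x)]| < size p)%N.
Proof.
move=> g_inj p_neq0; rewrite cardE -(size_map g).
apply: max_poly_roots p_neq0 _ _; last by rewrite (map_inj_uniq g_inj) enum_uniq.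
by apply/allP => y /mapP[x]; rewrite mem_enum inE => ? ->.
Qed.

Lemma const_or_shift {R : finZmodType} {S : {pred R}} {g : R -> R} :
  {in S &, forall t s, g t = g s \/ g t - g s = t - s} ->
  (exists b, {in S, forall t, g t = b}) \/ (exists b, {in S, forall t, g t = t + b}).
Proof.
move=> gS.
have [t0 t0S|S0] := pickP [in S]; last by left; exists 0 => t; rewrite S0.
have [/existsP[t /existsP[s /and4P[tS sS /eqP ts /eqP gts]]] | /existsPn inj] :=
  boolP [exists t, exists s, [&& t \in S, s \in S, t != s & g t == g s]].
- left; exists (g t) => r rS.
  have [//|grt] := gS r t rS tS; have [|grs] := gS r s rS sS; first by rewrite gts.
  by move: grs; rewrite -gts grt => /addrI /oppr_inj /ts.
- right; exists (g t0 - t0) => t tS.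
  suff gt: g t - g t0 = t - t0 by rewrite -[g t](subrK (g t0)) gt addrAC -addrA.
  have [gt|//] := gS t t0 tS t0S.
  have /existsPn/(_ t0) := inj t; rewrite tS t0S gt eqxx !andbT /= negbK => /eqP ->.
  by rewrite !subrr.
Qed.

Lemma horner_quad {F : finFieldType} (a b c x : F) :
  (quad a b c).[x] = a + b * x + c * x ^+ 2.
Proof. by rewrite /quad !hornerE; ring. Qed.

Section Char2Trace.
Context {F : finFieldType} {n : nat}.
Hypothesis card_F : #|F| = (2 ^ n)%N.

Lemma pchar2_card : 2%N \in [pchar F].
Proof. exact: card_finPcharP card_F _. Qed.

Lemma exponent_gt0 : (0 < n)%N.
Proof. by have := card_finNzRing_gt1 F; rewrite card_F; case: n. Qed.

Lemma half_card : (#|F| %/ 2 = 2 ^ n.-1)%N.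
Proof. by rewrite card_F -(prednK exponent_gt0) expnS mulKn. Qed.

Lemma exprD_2expn k (x y : F) : (x + y) ^+ (2 ^ k) = x ^+ (2 ^ k) + y ^+ (2 ^ k).
Proof. by apply: exprDn_pchar; rewrite pnatX pnatE ?pchar2_card. Qed.

Lemma sqrrD_pchar2 (x y : F) : (x + y) ^+ 2 = x ^+ 2 + y ^+ 2.
Proof. exact: (exprD_2expn 1). Qed.

Lemma exprD_half_card (x y : F) :
  (x + y) ^+ (#|F| %/ 2) = x ^+ (#|F| %/ 2) + y ^+ (#|F| %/ 2).
Proof. by rewrite half_card exprD_2expn. Qed.

Lemma sqr_expr_half_card (x : F) : (x ^+ (#|F| %/ 2)) ^+ 2 = x.
Proof. by rewrite -exprM half_card mulnC -expnS prednK ?exponent_gt0 // -card_F expf_card. Qed.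

Lemma expr_half_card_sqr (x : F) : (x ^+ 2) ^+ (#|F| %/ 2) = x.
Proof. by rewrite -exprM mulnC exprM sqr_expr_half_card. Qed.

Lemma trace2D (x y : F) : trace2 n (x + y) = trace2 n x + trace2 n y.
Proof. by rewrite /trace2 -big_split; apply: eq_bigr => i _; apply: exprD_2expn. Qed.

Lemma trace2_sqr (x : F) : trace2 n (x ^+ 2) = trace2 n x.
Proof.
rewrite /trace2 -(prednK exponent_gt0).
under eq_bigr do rewrite -exprM -expnS.
by rewrite big_ord_recr big_ord_recl /= prednK ?exponent_gt0 // -card_F expf_card addrC.
Qed.

Lemma trace20 : trace2 n (0 : F) = 0.
Proof. by rewrite /trace2 big1 // => i _; rewrite expr0n expn_eq0. Qed.

Lemma trace2_sqr_add (y : F) : trace2 n (y ^+ 2 + y) = 0.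
Proof. by rewrite trace2D trace2_sqr addrr_pchar2 ?pchar2_card. Qed.

Definition trace2_poly : {poly F} := \sum_(i < n) 'X^(2 ^ i).

Lemma horner_trace2_poly x : trace2_poly.[x] = trace2 n x.
Proof. by rewrite horner_sum; apply: eq_bigr => i _; rewrite hornerXn. Qed.

Lemma size_trace2_poly : size trace2_poly = (2 ^ n.-1).+1.
Proof.
rewrite /trace2_poly -(prednK exponent_gt0) big_ord_recr /= addrC.
rewrite size_polyDl size_polyXn // ltnS.
apply: (leq_trans (size_sum _ _ _)); apply/bigmax_leqP => i _.
by rewrite size_polyXn ltn_exp2l.
Qed.

Lemma trace2_form_nondegenerate {S : {set F}} {g : F -> F} {w : F} :
  injective g -> (#|F| < 2 * #|S|)%N -> {in S, forall x, trace2 n (w * g x) = 0} ->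
  w = 0.
Proof.
move=> g_inj card_S trS; apply/eqP; apply: contraTT card_S => w_neq0.
have tp_neq0 : trace2_poly != 0 by rewrite -size_poly_gt0 size_trace2_poly.
have wg_inj : injective (fun x => w * g x) by move=> x y /(mulfI w_neq0) /g_inj.
have := card_roots_inj wg_inj tp_neq0; rewrite size_trace2_poly ltnS => card_roots.
rewrite -leqNgt card_F -(prednK exponent_gt0) expnS leq_mul2l /=.
apply: leq_trans card_roots; apply/subset_leq_card/subsetP => x xS.
by rewrite inE /root horner_trace2_poly trS.
Qed.

Lemma trace2_quad_meet {a1 b1 c1 a2 b2 c2 x : F} :
  (quad a1 b1 c1).[x] = (quad a2 b2 c2).[x] -> b1 != b2 ->
  trace2 n ((a1 - a2) * (c1 - c2) / (b1 - b2) ^+ 2) = 0.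
Proof.
rewrite !horner_quad => meet b12; have db : b1 - b2 != 0 by rewrite subr_eq0.
have da : a1 - a2 = - ((b1 - b2) * x + (c1 - c2) * x ^+ 2).
  have -> : a1 - a2 = a1 + b1 * x + c1 * x ^+ 2 - (a2 + b2 * x + c2 * x ^+ 2)
                      - ((b1 - b2) * x + (c1 - c2) * x ^+ 2) by ring.
  by rewrite meet subrr sub0r.
set y := (c1 - c2) * x / (b1 - b2).
have -> : (a1 - a2) * (c1 - c2) / (b1 - b2) ^+ 2 = - (y ^+ 2 + y) by rewrite da /y; field.
by rewrite oppr_pchar2 ?pchar2_card // trace2_sqr_add.
Qed.

End Char2Trace.

Section Domain.
Context {F : finFieldType} {U : {pred {poly F}}}.

Lemma inDom_card_compl {t} : inDom U t -> (4 * #|~: Bset U t| ^ 2 <= #|F|)%N.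
Proof.
rewrite /inDom -{1}(cardsC (Bset U t)) natrD lerBlDr lerD2l.
set k := #|~: Bset U t| => k_le.
have k2_le : (k * 2)%:R <= sqrtC #|F|%:R :> algC by rewrite natrM -ler_pdivlMr.
have := ler_pM (ler0n _ _) (ler0n _ _) k2_le k2_le.
by rewrite -natrM -!expr2 sqrtCK ler_nat; lia.
Qed.

Lemma inDom_card_gt_half {t} : inDom U t -> (#|F| < 2 * #|Bset U t|)%N.
Proof.
move/inDom_card_compl; have := card_finNzRing_gt1 F.
by rewrite -(cardsC (Bset U t)); nia.
Qed.

Lemma inDom_card_gt2 {t} : (2 < #|F|)%N -> inDom U t -> (2 < #|Bset U t|)%N.
Proof.
by move=> + /inDom_card_compl; rewrite -(cardsC (Bset U t)); nia.
Qed.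

End Domain.

Section AffineSlices.
Context {F : finFieldType} {n : nat} {U : {pred {poly F}}} {A B : F -> F}.
Hypothesis card_F : #|F| = (2 ^ n)%N.
Hypothesis card_gt2 : (2 < #|F|)%N.
Hypothesis U_meet : intersecting U.
Hypothesis fU_affine : forall t, inDom U t -> forall b, b \in Bset U t ->
  fU U b (b + t) = A t * b + B t.
Hypothesis trace2_A : forall t, inDom U t -> trace2 n (A t) = 0.

Local Notation h := (#|F| %/ 2)%N.

Lemma quad_in_U {t b} : inDom U t -> b \in Bset U t ->
  quad (A t * b + B t) b (b + t) \in U.
Proof.
move=> tD bB; rewrite -fU_affine //; move: bB; rewrite /fU inE.
by case: pickP => [a //|none] /existsP[a]; rewrite none.
Qed.

Lemma slope_identity {t s b} : inDom U t -> inDom U s -> b \in Bset U t ->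
  let P := (A t - A s) * b + (B t - B s) in
  P * (t - s) = (P + A s * (t - s)) ^+ 2.
Proof.
move=> tD sD bB P; set u := t - s.
have pchar2 := pchar2_card card_F.
(* With W the left-hand side below and b' = b - d, the quantity of trace2_quad_meet
   has the trace of W / d, as Tr (A s) = 0 and Tr (z ^+ 2) = Tr z. *)
suff W0 : (P * u) ^+ h + (P + A s * u) = 0.
  have := congr1 (fun z => z ^+ 2) W0.
  rewrite (sqrrD_pchar2 card_F) (sqr_expr_half_card card_F) expr0n /= => /eqP.
  by rewrite addr_eq0 oppr_pchar2 // => /eqP.
have g_inj : injective (fun b' : F => (b - b')^-1) by move=> x y /invr_inj /addrI /oppr_inj.
apply: (trace2_form_nondegenerate card_F g_inj (inDom_card_gt_half sD)) => b' b'B /=.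
(* b' = b is harmless: (b - b)^-1 = 0. *)
have [<-|bb'] := eqVneq b b'; first by rewrite subrr invr0 mulr0 trace20.
have [x meet] := U_meet _ _ (quad_in_U tD bB) (quad_in_U sD b'B).
have := trace2_quad_meet card_F meet bb'.
set d := b - b'; have d_neq0 : d != 0 by rewrite subr_eq0.
have -> : (A t * b + B t - (A s * b' + B s)) * (b + t - (b' + s)) / (b - b') ^+ 2
    = A s + ((P + A s * u) * d^-1 + ((P * u) ^+ h * d^-1) ^+ 2).
  by rewrite exprMn (sqr_expr_half_card card_F) /P /u /d; field.
rewrite !(trace2D card_F) trace2_A // (trace2_sqr card_F) add0r -(trace2D card_F).
by rewrite -mulrDl addrC.
Qed.

Lemma A_const {t s} : inDom U t -> inDom U s -> A t = A s.
Proof.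
move=> tD sD; apply/eqP; apply: contraTT (inDom_card_gt2 card_gt2 tD).
rewrite -subr_eq0 => dA; rewrite -leqNgt.
set u := t - s; set c := - (A s * u).
pose p := ('X - c%:P) ^+ 2 - u *: 'X.
have size_p : size p = 3.
  rewrite size_polyDl ?size_exp_XsubC // size_polyN.
  by rewrite (leq_ltn_trans (size_scale_leq _ _)) ?size_polyX.
have p_neq0 : p != 0 by rewrite -size_poly_gt0 size_p.
have P_inj : injective (fun b => (A t - A s) * b + (B t - B s)).
  by move=> x y /addIr /(mulfI dA).
have := card_roots_inj P_inj p_neq0; rewrite size_p ltnS; apply: leq_trans.
apply/subset_leq_card/subsetP => b bB; rewrite inE /root /p !hornerE /= opprK.
by have := slope_identity tD sD bB; rewrite /= !addrA -/u => <-; rewrite mulrC subrr.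
Qed.

Lemma A_artin_schreier {t} : inDom U t -> exists alpha, A t = alpha ^+ h + alpha.
Proof.
move=> tD; have /ltnW/card_gt1P[b1 [b2 [b1B b2B b12]]] := inDom_card_gt2 card_gt2 tD.
have [x] := U_meet _ _ (quad_in_U tD b1B) (quad_in_U tD b2B).
rewrite !horner_quad => meet.
have : (b1 - b2) * (x + x ^+ 2 + A t) = 0.
  by rewrite -[RHS](subrr (A t * b1 + B t + b1 * x + (b1 + t) * x ^+ 2)) {2}meet; ring.
move/eqP; rewrite mulf_eq0 subr_eq0 (negbTE b12) addr_eq0.
rewrite oppr_pchar2 ?(pchar2_card card_F) //.
by move/eqP <-; exists (x ^+ 2); rewrite (expr_half_card_sqr card_F).
Qed.

Lemma slope_dichotomy {alpha t s} : inDom U t -> inDom U s -> A s = alpha ^+ h + alpha ->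
  B t - alpha * t = B s - alpha * s \/ (B t - alpha * t) - (B s - alpha * s) = t - s.
Proof.
move=> tD sD As; have pchar2 := pchar2_card card_F.
have /card_gt0P[b bB] : (0 < #|Bset U t|)%N.
  by rewrite lt0n; apply: contraTneq (inDom_card_gt_half tD) => ->; rewrite muln0.
have := slope_identity tD sD bB; rewrite /= (A_const tD sD) subrr mul0r add0r As.
set D := _ - (B s - alpha * s); set u := t - s.
have -> : B t - B s = D + alpha * u by rewrite /D /u; ring.
have -> : D + alpha * u + (alpha ^+ h + alpha) * u
    = D + alpha ^+ h * u + (alpha * u + alpha * u) by ring.
rewrite addrr_pchar2 // addr0 (sqrrD_pchar2 card_F) exprMn (sqr_expr_half_card card_F) => e.
have : D * (D - u) = D ^+ 2 + alpha * u ^+ 2 - (D + alpha * u) * u by ring.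
rewrite -e subrr => /eqP; rewrite mulf_eq0 !subr_eq0 => /orP[|] /eqP; by [left | right].
Qed.

End AffineSlices.

Theorem lemma13 (F : finFieldType) (n : nat) (U : {pred {poly F}})
  (A B : F -> F) :
  #|F| = (2 ^ n)%N -> (2 < #|F|)%N ->
  deg_le2 U -> intersecting U ->
  (forall t, inDom U t -> forall b, b \in Bset U t ->
     fU U b (b + t) = A t * b + B t) ->
  (forall t, inDom U t -> trace2 n (A t) = 0) ->
  exists alpha beta : F, forall t, inDom U t ->
    A t = alpha ^+ (#|F| %/ 2) + alpha /\ B t = alpha * t + beta.
Proof.
move=> card_F card_gt2 _ U_meet fU_affine trace2_A.
have [t0 t0D|Dom0] := pickP (inDom U); last by exists 0, 0 => t; rewrite Dom0.
have A_t0 t : inDom U t -> A t = A t0.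
  by move=> tD; apply: (A_const card_F card_gt2 U_meet fU_affine trace2_A tD t0D).
have [alpha A_alpha] := A_artin_schreier card_F card_gt2 U_meet fU_affine t0D.
have slopes : {in inDom U &, forall t s, B t - alpha * t = B s - alpha * s
                                   \/ (B t - alpha * t) - (B s - alpha * s) = t - s}.
  move=> t s tD sD.
  by apply: (slope_dichotomy card_F card_gt2 U_meet fU_affine trace2_A tD sD); rewrite A_t0.
have [[beta g_const]|[beta g_shift]] := const_or_shift slopes.
- exists alpha, beta => t tD; split; first by rewrite A_t0.
  by rewrite -(g_const t tD); ring.
- exists (alpha + 1), beta => t tD; split.
    rewrite A_t0 // A_alpha (exprD_half_card card_F) expr1n addrACA.
    by rewrite addrr_pchar2 ?(pchar2_card card_F) ?addr0.
  by rewrite mulrDl mul1r -addrA -(g_shift t tD); ring.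
Qed.
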